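(* Let $B\to K\leftarrow C$ be ring homomorphisms with $C\to K$ surjective, $A=B\times_K C$, and $X=\mathrm{Spec}\,A$, $Y=\mathrm{Spec}\,B$, $Z=\mathrm{Spec}\,C$, $T=\mathrm{Spec}\,K$, with the induced morphisms ($Y\to X$ is the closed immersion defined by the kernel of $A\to B$, $T\to Z$ the closed immersion). Let $R$ be a valuation ring which is not a field, $S=\mathrm{Spec}\,R$ with closed point $s$, and $f:S\to X$ a morphism with $f^{-1}(Y)=\{s\}$. Then $f$ admits a unique lifting $g:S\to Z$ (i.e., $f$ is the composition of $g$ with $Z\to X$), and this lifting satisfies $g^{-1}(T)=\{s\}$. *)

(* Affine schemes are encoded through rings: a morphism
   Spec R -> Spec A is a ring morphism A -> R, a point of Spec R is a prime
   ideal of R. *)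
From HB Require Import structures.
From mathcomp Require Import all_boot all_order all_algebra.
Set Implicit Arguments. Unset Strict Implicit. Unset Printing Implicit Defensive.
Import Order.TTheory GRing.Theory Num.Theory.
Local Open Scope ring_scope.

Definition is_prime_ideal (R : comPzRingType) (P : R -> Prop) : Prop :=
  [/\ P 0,
      (forall x y, P x -> P y -> P (x + y)),
      (forall r x, P x -> P (r * x)),
      ~ P 1 &
      (forall x y, P (x * y) -> P x \/ P y)].

Definition is_valuation_ring (R : idomainType) : Prop :=
  forall x : {fraction R}, x != 0 ->
    (exists a : R, x = tofrac a) \/ (exists a : R, x^-1 = tofrac a).

Definition not_a_field (R : idomainType) : Prop :=
  exists x : R, x != 0 /\ x \notin GRing.unit.

Definition is_fibre_product (A B C K : comPzRingType)
  (beta : {rmorphism B -> K}) (gamma : {rmorphism C -> K})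
  (pB : {rmorphism A -> B}) (pC : {rmorphism A -> C}) : Prop :=
  [/\ (forall a, beta (pB a) = gamma (pC a)),
      (forall a a', pB a = pB a' -> pC a = pC a' -> a = a') &
      (forall b c, beta b = gamma c -> exists a, pB a = b /\ pC a = c)].

(* Preimage, under Spec(phi) : Spec R -> Spec A, of the closed subscheme
   V(ker p) of Spec A (p : A -> B), is the set of primes Q of R with
   ker p ⊆ phi^-1(Q).  "preimage_is_closed_point" says this set is exactly
   the closed point {m}, m = the maximal ideal (= non-units) of the local
   ring R. *)
Definition preimage_is_closed_point (A B : comPzRingType) (R : idomainType)
  (p : {rmorphism A -> B}) (phi : {rmorphism A -> R}) : Prop :=
  forall Q : R -> Prop, is_prime_ideal Q ->
    ((forall a, p a = 0 -> Q (phi a)) <->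
     (forall x, Q x <-> x \notin GRing.unit)).

(* Let a0 be an element of J := ker (A -> B) with f a0 != 0; it exists since
   otherwise the zero ideal of R would lie over Y, i.e. R would be a field.
   The projection A -> C maps J isomorphically onto the ideal ker gamma, so
   for each c there is a unique a_c in J with image c * a0, and the lift is
   g c := f a_c / f a0.  The quotient lies in R: otherwise f a0 = r f a_c
   with r a nonunit, and then every element of f(J) is divisible by every
   power of r; the elements divisible by all powers of r form a prime ideal
   of the valuation ring not containing r, which contradicts
   f^-1(Y) = {s}.  Uniqueness of g and g^-1(T) = {s} only use that J is
   mapped onto ker gamma. *)
From HB Require Import structures.
From mathcomp Require Import all_boot all_order all_algebra.
From Stdlib Require Import Classical ClassicalEpsilon.
From mathcomp Require Import ring.
Set Implicit Arguments. Unset Strict Implicit.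
Import Order.TTheory GRing.Theory Num.Theory.
Local Open Scope ring_scope.

Section RMorphismOfFunction.
Variables (C R : comPzRingType) (g : C -> R).
Hypotheses (g0 : g 0 = 0) (gD : {morph g : x y / x + y}).
Hypotheses (g1 : g 1 = 1) (gM : {morph g : x y / x * y}).

Definition rmorphism_of_fun := g.
HB.instance Definition _ :=
  GRing.isNmodMorphism.Build C R rmorphism_of_fun (g0, gD).
HB.instance Definition _ :=
  GRing.isMonoidMorphism.Build C R rmorphism_of_fun (g1, gM).

Lemma exists_rmorphism : exists h : {rmorphism C -> R}, h =1 g.
Proof. by exists rmorphism_of_fun. Qed.

End RMorphismOfFunction.

Definition divisible_by_all_powers (R : comPzRingType) (r y : R) : Prop :=
  forall k : nat, exists z, y = r ^+ k * z.

Lemma divisible_by_all_powers_stable (R : comPzRingType) (r : R)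
    (S : R -> Prop) :
  (forall y, S y -> exists y', S y' /\ y = r * y') ->
  forall y, S y -> divisible_by_all_powers r y.
Proof.
move=> stable y Sy k; elim: k y Sy => [|k IHk] y Sy.
  by exists y; rewrite mul1r.
have [y' [Sy' ->]] := stable y Sy; have [z ->] := IHk y' Sy'.
by exists z; rewrite exprS mulrA.
Qed.

Lemma is_prime_ideal_zero (R : idomainType) :
  is_prime_ideal (fun y : R => y = 0).
Proof.
split=> //.
- by move=> x y -> ->; rewrite addr0.
- by move=> r x ->; rewrite mulr0.
- by move/eqP; rewrite oner_eq0.
- by move=> x y /eqP; rewrite mulf_eq0 => /orP[/eqP|/eqP]; [left|right].
Qed.

Section ValuationRing.
Variables (R : idomainType) (hval : is_valuation_ring R).

Lemma valuation_dvd_total (u v : R) :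
  (exists a, u = a * v) \/ (exists a, v = a * u).
Proof.
have [->|v0] := eqVneq v 0; first by right; exists 0; rewrite mul0r.
have [->|u0] := eqVneq u 0; first by left; exists 0; rewrite mul0r.
have [uF vF] : tofrac u != 0 /\ tofrac v != 0 by rewrite !tofrac_eq0.
have uv0 : tofrac u / tofrac v != 0.
  by rewrite mulf_eq0 invr_eq0 !tofrac_eq0 negb_or u0 v0.
case: (hval uv0) => [[a ha]|[a ha]]; [left|right]; exists a; apply/eqP.
  by rewrite -tofrac_eq rmorphM /= -ha mulfVK.
by rewrite -tofrac_eq rmorphM /= -ha invfM invrK mulrAC mulVf // mul1r.
Qed.

Lemma divisible_by_all_powers_prime (r : R) :
  r != 0 -> r \notin GRing.unit -> is_prime_ideal (divisible_by_all_powers r).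
Proof.
move=> r0 rNunit; split.
- by move=> k; exists 0; rewrite mulr0.
- move=> x y dx dy k; have [u ->] := dx k; have [v ->] := dy k.
  by exists (u + v); rewrite mulrDr.
- by move=> s x dx k; have [v ->] := dx k; exists (s * v); rewrite mulrCA.
- move=> d1; have [z z1] := d1 1%N; move/negP: rNunit; apply.
  by apply/unitrPr; exists z; rewrite -z1.
move=> x y dxy; apply: NNPP => /not_or_and[/not_all_ex_not[i xi]].
move=> /not_all_ex_not[j yj].
have [[w xw]|[w ri]] := valuation_dvd_total x (r ^+ i).
  by apply: xi; exists w; rewrite mulrC.
have [[w' yw']|[w' rj]] := valuation_dvd_total y (r ^+ j).
  by apply: yj; exists w'; rewrite mulrC.
have [s xys] := dxy (i + j).+1.
have : r ^+ (i + j) * 1 = r ^+ (i + j) * (r * (w * w' * s)).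
  transitivity ((w * x) * (w' * y)); first by rewrite mulr1 exprD -ri -rj.
  rewrite mulrACA xys exprSr; ring.
move/(mulfI (expf_neq0 (i + j) r0)) => rs1.
by move/negP: rNunit; apply; apply/unitrPr; exists (w * w' * s); rewrite -rs1.
Qed.

Lemma not_divisible_by_all_powers_self (r : R) :
  r != 0 -> r \notin GRing.unit -> ~ divisible_by_all_powers r r.
Proof.
move=> r0 rNunit /(_ 2%N) [z rz]; move/negP: rNunit; apply.
by apply/unitrPr; exists z; apply: (mulfI r0); rewrite mulr1 mulrA -expr2 -rz.
Qed.

End ValuationRing.

Section ClosedPointPreimage.
Variables (A B : comPzRingType) (R : idomainType).
Variables (p : {rmorphism A -> B}) (phi : {rmorphism A -> R}).
Hypothesis hphi : preimage_is_closed_point p phi.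

Lemma closed_point_preimage_nonzero :
  not_a_field R -> exists a, p a = 0 /\ phi a != 0.
Proof.
move=> [x [x0 xNunit]]; apply: NNPP => none.
have ker0 a : p a = 0 -> phi a = 0.
  move=> pa0; apply: NNPP => phia0.
  by apply: none; exists a; split=> //; apply/eqP.
have /eqP := ((hphi (is_prime_ideal_zero R)).1 ker0 x).2 xNunit.
by rewrite (negPf x0).
Qed.

Lemma closed_point_preimage_not_divisible (r : R) :
  is_valuation_ring R -> r != 0 -> r \notin GRing.unit ->
  ~ (forall a, p a = 0 -> divisible_by_all_powers r (phi a)).
Proof.
move=> hval r0 rNunit ker_div.
have rprime := divisible_by_all_powers_prime hval r0 rNunit.
apply: (not_divisible_by_all_powers_self r0 rNunit).
exact: ((hphi rprime).1 ker_div r).2.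
Qed.

End ClosedPointPreimage.

Section FibreProductKernel.
Variables (A B C K : comPzRingType).
Variables (beta : {rmorphism B -> K}) (gamma : {rmorphism C -> K}).
Variables (pB : {rmorphism A -> B}) (pC : {rmorphism A -> C}).
Hypothesis hA : is_fibre_product beta gamma pB pC.

Lemma fibre_kernel_inj a a' : pB a = 0 -> pB a' = 0 -> pC a = pC a' -> a = a'.
Proof. by case: hA => _ hinj _ pa0 pa'0; apply: hinj; rewrite pa0 pa'0. Qed.

Lemma fibre_kernel_mul_lift c a1 :
  pB a1 = 0 -> exists a, pB a = 0 /\ pC a = c * pC a1.
Proof.
case: hA => hcomm _ hsurj pa10; apply: hsurj.
by rewrite rmorph0 rmorphM /= -hcomm pa10 !rmorph0 mulr0.
Qed.

Lemma fibre_kernel_cross_mul x y z w :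
  pB x = 0 -> pB z = 0 -> pC x * pC y = pC z * pC w -> x * y = z * w.
Proof.
move=> px0 pz0 e; apply: fibre_kernel_inj; rewrite ?rmorphM //=.
  by rewrite px0 mul0r.
by rewrite pz0 mul0r.
Qed.

Lemma fibre_kernel_preimageE (Q : C -> Prop) :
  (forall c, gamma c = 0 -> Q c) <-> (forall a, pB a = 0 -> Q (pC a)).
Proof.
case: hA => hcomm _ hsurj; split=> [Qker a pa0 | Qker c gc0].
  by apply: Qker; rewrite -hcomm pa0 rmorph0.
have [a [pa0 <-]] := hsurj 0 c (etrans (rmorph0 _) (esym gc0)).
exact: Qker.
Qed.

Section Lift.
Variables (R : idomainType) (f : {rmorphism A -> R}) (a0 : A).
Hypotheses (pa0 : pB a0 = 0) (fa0 : f a0 != 0).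

Lemma lift_unique (g1 g2 : {rmorphism C -> R}) :
  (forall a, g1 (pC a) = f a) -> (forall a, g2 (pC a) = f a) -> g1 =1 g2.
Proof.
move=> g1f g2f c; have [a [_ pCa]] := fibre_kernel_mul_lift c pa0.
have liftE (g : {rmorphism C -> R}) :
    (forall a, g (pC a) = f a) -> g c * f a0 = f a.
  by move=> gf; rewrite -gf -gf pCa rmorphM.
by apply: (mulIf fa0); rewrite !liftE.
Qed.

Hypotheses (hval : is_valuation_ring R) (hf : preimage_is_closed_point pB f).

Lemma fibre_kernel_image_dvd c a :
  pB a = 0 -> pC a = c * pC a0 -> exists r, f a = r * f a0.
Proof.
move=> pa pCa.
have [//|[r a0r]] := valuation_dvd_total hval (f a) (f a0).
have [runit|rNunit] := boolP (r \is a GRing.unit).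
  by exists r^-1; rewrite a0r mulKr.
have fa_0 : f a != 0.
  by apply: contraNneq fa0 => fa_eq; rewrite a0r fa_eq mulr0.
have r0 : r != 0 by apply: contraNneq fa0 => r_eq; rewrite a0r r_eq mul0r.
exfalso; apply: (closed_point_preimage_not_divisible hf hval r0 rNunit).
move=> a1 pa10; apply: (divisible_by_all_powers_stable (S := fun y =>
  exists a1, pB a1 = 0 /\ y = f a1)); last by exists a1.
(* With c.y the element of J over c * pC y: f (c.a2) * f a0 = f a2 * f a and
   f a0 = r * f a give f a2 = r * f (c.a2). *)
move=> _ [a2 [pa20 ->]]; have [a3 [pa30 pCa3]] := fibre_kernel_mul_lift c pa20.
exists (f a3); split; first by exists a3.
have : a3 * a0 = a2 * a.
  by apply: fibre_kernel_cross_mul; rewrite // pCa3 pCa mulrCA mulrA.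
move/(congr1 f); rewrite !rmorphM /= a0r mulrCA mulrA => /(mulIf fa_0).
by move->.
Qed.

Lemma exists_lift_quotient : exists gf : C -> R,
  forall c a, pB a = 0 -> pC a = c * pC a0 -> f a = gf c * f a0.
Proof.
apply: (choice (fun c r => forall a, pB a = 0 -> pC a = c * pC a0 ->
  f a = r * f a0)) => c.
have [a [pa pCa]] := fibre_kernel_mul_lift c pa0.
have [r fa] := fibre_kernel_image_dvd pa pCa.
exists r => a' pa'0 pCa'.
by rewrite (fibre_kernel_inj pa'0 pa (etrans pCa' (esym pCa))).
Qed.

Lemma exists_lift : exists g : {rmorphism C -> R}, forall a, g (pC a) = f a.
Proof.
have [gf gfE] := exists_lift_quotient.
have g0 : gf 0 = 0.
  by apply: (mulIf fa0); rewrite mul0r -(gfE 0 0) ?rmorph0 ?mul0r.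
have gD : {morph gf : x y / x + y}.
  move=> x y; apply: (mulIf fa0); rewrite mulrDl.
  have [ax [pax pCax]] := fibre_kernel_mul_lift x pa0.
  have [ay [pay pCay]] := fibre_kernel_mul_lift y pa0.
  rewrite -(gfE x ax) // -(gfE y ay) // -rmorphD -(gfE _ (ax + ay)) //.
    by rewrite rmorphD /= pax pay addr0.
  by rewrite rmorphD /= pCax pCay mulrDl.
have g1 : gf 1 = 1 by apply: (mulIf fa0); rewrite mul1r -(gfE 1 a0) ?mul1r.
have gM : {morph gf : x y / x * y}.
  move=> x y; apply: (mulIf fa0); apply: (mulIf fa0).
  have [ax [pax pCax]] := fibre_kernel_mul_lift x pa0.
  have [ay [pay pCay]] := fibre_kernel_mul_lift y pa0.
  have [axy [paxy pCaxy]] := fibre_kernel_mul_lift (x * y) pa0.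
  have -> : gf x * gf y * f a0 * f a0 = (gf x * f a0) * (gf y * f a0).
    by rewrite mulrACA mulrA.
  rewrite -(gfE x ax) // -(gfE y ay) // -(gfE _ axy) // -!rmorphM.
  congr (f _); apply: fibre_kernel_cross_mul => //.
  by rewrite pCaxy pCax pCay mulrACA mulrA.
have [g gE] := exists_rmorphism g0 gD g1 gM.
exists g => a; rewrite gE; apply: (mulIf fa0).
by rewrite -(gfE _ (a * a0)) ?rmorphM //= pa0 mulr0.
Qed.

End Lift.

End FibreProductKernel.

Theorem lemma3p3p4 (A B C K : comPzRingType)
  (beta : {rmorphism B -> K}) (gamma : {rmorphism C -> K})
  (gamma_surj : forall k : K, exists c : C, gamma c = k)
  (pB : {rmorphism A -> B}) (pC : {rmorphism A -> C})
  (hA : is_fibre_product beta gamma pB pC)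
  (R : idomainType) (hval : is_valuation_ring R) (hnf : not_a_field R)
  (f : {rmorphism A -> R})
  (hf : preimage_is_closed_point pB f) :
  exists g : {rmorphism C -> R},
    [/\ (forall a, g (pC a) = f a),
        (forall g' : {rmorphism C -> R},
            (forall a, g' (pC a) = f a) -> forall c, g' c = g c) &
        preimage_is_closed_point gamma g].
Proof.
have [a0 [pa0 fa0]] := closed_point_preimage_nonzero hf hnf.
have [g gf] := exists_lift hA pa0 fa0 hval hf.
exists g; split=> //.
- by move=> g' g'f; apply: (lift_unique hA pa0 fa0).
move=> Q hQ; rewrite -(hf Q hQ) (fibre_kernel_preimageE hA (fun c => Q (g c))).
by split=> Qker a pa; [rewrite -gf | rewrite gf]; apply: Qker.
Qed.
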